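(* Let $\phi:\mathbb{R}^n\to\mathbb{R}$ satisfy Assumption A and let $0<\gamma L_\phi<2$. Then the discrete-time system with input $e\in\mathbb{R}^n$ $$\tilde u^+=\tilde u-\gamma(\nabla\phi(\tilde u)+e)$$ is ISS with respect to $\mathcal{A}_d=\{u^\star\}$.
   Context: Assumption A: $\phi$ is continuously differentiable and there exist $L_\phi>0$, $u^\star\in\mathbb{R}^n$ and class-$\mathcal{K}_\infty$ functions $\mu_1,\mu_2$ such that $\nabla\phi(u)=0$ iff $u=u^\star$, and for all $u,\tilde u\in\mathbb{R}^n$: $\mu_1(\|u-u^\star\|)\le\phi(u)-\phi(u^\star)$, $\mu_2(\phi(u)-\phi(u^\star))\le\|\nabla\phi(u)\|$, and $\|\nabla\phi(u)-\nabla\phi(\tilde u)\|\le L_\phi\|u-\tilde u\|$. ISS: the system $x^+=G_d(x,e)$ is ISS with respect to a compact set $\mathcal{A}_d$ if there exist $\beta\in\mathcal{KL}$, $\alpha\in\mathcal{K}_\infty$ such that for every bounded input sequence $e$ every solution satisfies $|x(j)|_{\mathcal{A}_d}\le\beta(|x(0)|_{\mathcal{A}_d},j)+\alpha(\sup_k\|e(k)\|)$ for all $j\in\mathbb{N}$. *)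

From HB Require Import structures.
From mathcomp Require Import all_boot all_order all_algebra.
From mathcomp Require Import all_classical all_reals all_analysis.
Set Implicit Arguments. Unset Strict Implicit. Unset Printing Implicit Defensive.
Import Order.TTheory GRing.Theory Num.Theory.
Import numFieldNormedType.Exports.
Local Open Scope classical_set_scope.
Local Open Scope ring_scope.

Definition dotv {R : realType} {n : nat} (u v : 'rV[R]_n) : R :=
  \sum_(i < n) u 0 i * v 0 i.
Definition enorm {R : realType} {n : nat} (u : 'rV[R]_n) : R :=
  Num.sqrt (dotv u u).

Definition is_gradient {R : realType} {n : nat}
  (phi : 'rV[R]_n -> R) (g : 'rV[R]_n -> 'rV[R]_n) : Prop :=
  forall u, differentiable phi u /\ forall h, 'd phi u h = dotv (g u) h.

Definition classK {R : realType} (a : R -> R) : Prop :=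
  a 0 = 0 /\
  {within [set x : R | 0 <= x], continuous a} /\
  (forall s t : R, 0 <= s -> s < t -> a s < a t).

Definition classKinf {R : realType} (a : R -> R) : Prop :=
  classK a /\ (forall M : R, exists s : R, 0 <= s /\ M < a s).

Definition classKL {R : realType} (b : R -> nat -> R) : Prop :=
  (forall j : nat, classK (fun s => b s j)) /\
  (forall s : R, 0 <= s ->
     (forall j k : nat, (j <= k)%N -> b s k <= b s j) /\
     (fun j => b s j) @ \oo --> (0 : R)).

Definition AssumptionA {R : realType} {n : nat}
  (phi : 'rV[R]_n -> R) (g : 'rV[R]_n -> 'rV[R]_n)
  (L : R) (ustar : 'rV[R]_n) (mu1 mu2 : R -> R) : Prop :=
  is_gradient phi g /\ continuous g /\
  0 < L /\ classKinf mu1 /\ classKinf mu2 /\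
  (forall u, g u = 0 <-> u = ustar) /\
  (forall u, mu1 (enorm (u - ustar)) <= phi u - phi ustar) /\
  (forall u, mu2 (phi u - phi ustar) <= enorm (g u)) /\
  (forall u v, enorm (g u - g v) <= L * enorm (u - v)).

Definition dist_set {R : realType} {n : nat} (A : set 'rV[R]_n) (x : 'rV[R]_n) : R :=
  inf [set enorm (x - a) | a in A].

Definition ISS {R : realType} {n m : nat}
  (G : 'rV[R]_n -> 'rV[R]_m -> 'rV[R]_n) (A : set 'rV[R]_n) : Prop :=
  exists (beta : R -> nat -> R) (alpha : R -> R),
    classKL beta /\ classKinf alpha /\
    forall (e : nat -> 'rV[R]_m) (x : nat -> 'rV[R]_n),
      has_ubound (range (fun k => enorm (e k))) ->
      (forall j, x j.+1 = G (x j) (e j)) ->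
      forall j : nat,
        dist_set A (x j) <=
          beta (dist_set A (x 0%N)) j + alpha (sup (range (fun k => enorm (e k)))).

(* With [V u := phi u - phi ustar], the descent lemma and Young's inequality give
   [V u+ <= V u - c |grad phi u|^2 + K |e|^2 <= V u - rho (V u) + K |e|^2] for
   [rho := c mu2^2], while [mu1 |u - ustar| <= V u <= L/2 |u - ustar|^2].
   A nonnegative sequence with [y_(k+1) <= y_k - rho y_k + W] stays below
   [max (rho^-1 (2 W) + W, tau, y_0 - k rho tau / 2)] for every [tau >= 0]; choosing
   [rho tau = 2 y_0 / (j + 1)] splits [y_j] into a class-KL transient in [y_0] and a
   class-K_oo function of [W], and the sandwich on [V] turns this into the ISS bound. *)

From HB Require Import structures.
From mathcomp Require Import all_boot all_order all_algebra.
From mathcomp Require Import all_classical all_reals all_analysis.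
From mathcomp Require Import ring lra.
Set Implicit Arguments.
Unset Strict Implicit.
Unset Printing Implicit Defensive.
Import Order.TTheory GRing.Theory Num.Theory.
Import numFieldNormedType.Exports.
Local Open Scope classical_set_scope.
Local Open Scope ring_scope.

Section KinfFunctions.
Variable R : realType.
Implicit Types (f h : R -> R) (s t x y : R).

Definition nonneg_continuous f := forall x, 0 <= x -> forall eps, 0 < eps ->
  exists2 d, 0 < d & forall y, 0 <= y -> `|y - x| < d -> `|f y - f x| < eps.

Lemma nonneg_continuousP f :
  nonneg_continuous f <-> {within [set x | 0 <= x], continuous f}.
Proof.
split=> [fc|/subspace_continuousP fc x x0 e e0].
  apply/subspace_continuousP => x /= x0.
  apply/cvgrPdist_lt => e e0; rewrite near_withinE.
  have [d d0 fd] := fc x x0 e e0.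
  by exists d => //= y /= xy y0; rewrite distrC fd // distrC.
have /cvgrPdist_lt/(_ e e0) := fc x x0; rewrite near_withinE.
by case=> d /= d0 fd; exists d => // y y0 xy; rewrite distrC fd //= distrC.
Qed.

(* [classKinf] with continuity in epsilon-delta form, which composes directly. *)
Definition Kinf f := [/\ f 0 = 0, forall s t, 0 <= s -> s < t -> f s < f t,
  nonneg_continuous f & forall M, exists2 s, 0 <= s & M < f s].

Lemma classKinfP f : classKinf f <-> Kinf f.
Proof.
split=> [[[f0 [/nonneg_continuousP fc fi]] fu]|[f0 fi /nonneg_continuousP fc fu]].
  by split=> // M; have [s [s0 Ms]] := fu M; exists s.
by do 2?split => // M; have [s s0 Ms] := fu M; exists s.
Qed.

Section Monotone.
Variable f : R -> R.
Hypothesis fK : Kinf f.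

Lemma Kinf_le s t : 0 <= s -> s <= t -> f s <= f t.
Proof.
case: fK => _ fi _ _ s0; rewrite le_eqVlt => /predU1P[->//|st].
exact/ltW/fi.
Qed.

Lemma Kinf_ge0 s : 0 <= s -> 0 <= f s.
Proof. by move=> s0; case: fK => f0 _ _ _; rewrite -f0 Kinf_le. Qed.

Lemma Kinf_leP s t : 0 <= s -> 0 <= t -> (f s <= f t) = (s <= t).
Proof.
move=> s0 t0; apply/idP/idP => [|/(Kinf_le s0)//].
by case: fK => _ fi _ _; apply: contraTT; rewrite -!ltNge => /fi->.
Qed.

Lemma Kinf_ltP s t : 0 <= s -> 0 <= t -> (f s < f t) = (s < t).
Proof. by move=> s0 t0; rewrite !ltNge Kinf_leP. Qed.

Lemma Kinf_add_le s t : 0 <= s -> 0 <= t -> f (s + t) <= f (2 * s) + f (2 * t).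
Proof.
move=> s0 t0; have fs0 := Kinf_ge0 (mulr_ge0 (ler0n _ 2) s0).
have ft0 := Kinf_ge0 (mulr_ge0 (ler0n _ 2) t0).
have [st|ts] := leP s t.
  by rewrite (le_trans (Kinf_le _ (_ : s + t <= 2 * t))) ?lerDr ?addr_ge0 //; lra.
by rewrite (le_trans (Kinf_le _ (_ : s + t <= 2 * s))) ?lerDl ?addr_ge0 //; lra.
Qed.

Lemma Kinf_cvg0 (u : R ^nat) : (forall j, 0 <= u j) ->
  u @ \oo --> 0 -> (fun j => f (u j)) @ \oo --> 0.
Proof.
case: fK => f0 _ fc _ u0 /cvgrPdist_lt u_cvg; apply/cvgrPdist_lt => e e0.
have [d d0 fd] := fc 0 (lexx 0) e e0.
apply: filterS (u_cvg d d0) => j uj; rewrite sub0r normrN -[f _]subr0 -f0.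
by apply: fd (u0 j) _; rewrite subr0 -normrN -sub0r.
Qed.

End Monotone.

Lemma Kinf_id : Kinf id.
Proof.
split=> // [x x0 e e0|M]; first by exists e.
have [M0 MM] : 0 <= Num.max M 0 /\ M <= Num.max M 0 by rewrite !le_max !lexx orbT.
by exists (Num.max M 0 + 1) => /=; lra.
Qed.

Lemma Kinf_comp f h : Kinf f -> Kinf h -> Kinf (f \o h).
Proof.
move=> fK hK; case: (fK) => f0 fi fc fu; case: (hK) => h0 hi hc hu; split=> /=.
- by rewrite h0 f0.
- by move=> s t s0 st; apply: fi; [exact: Kinf_ge0|exact: hi].
- move=> x x0 e e0; have [d1 d10 fd] := fc (h x) (Kinf_ge0 hK x0) e e0.
  have [d2 d20 hd] := hc x x0 d1 d10.
  by exists d2 => // y y0 yx; apply: fd; [exact: Kinf_ge0 | exact: hd].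
- move=> M; have [s s0 Ms] := fu M; have [t t0 st] := hu s.
  by exists t => //; apply: lt_le_trans Ms (Kinf_le fK s0 (ltW st)).
Qed.

Lemma Kinf_add f h : Kinf f -> Kinf h -> Kinf (fun x => f x + h x).
Proof.
move=> fK hK; case: (fK) => f0 fi fc fu; case: (hK) => h0 hi hc _; split.
- by rewrite f0 h0 addr0.
- by move=> s t s0 st; apply: ltrD; [exact: fi|exact: hi].
- move=> x x0 e e0; have e20 : 0 < e / 2 by rewrite divr_gt0.
  have [d1 d10 fd] := fc x x0 _ e20; have [d2 d20 hd] := hc x x0 _ e20.
  exists (Num.min d1 d2) => [|y y0]; first by rewrite lt_min d10 d20.
  rewrite lt_min => /andP[/(fd _ y0) yx1 /(hd _ y0) yx2].
  have -> : f y + h y - (f x + h x) = (f y - f x) + (h y - h x) by ring.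
  by rewrite (le_lt_trans (ler_normD _ _)) // [e]splitr ltrD.
- move=> M; have [s s0 Ms] := fu M; exists s => //.
  by rewrite ltr_wpDr // Kinf_ge0.
Qed.

Lemma Kinf_scale k f : 0 < k -> Kinf f -> Kinf (fun x => k * f x).
Proof.
move=> k0 [f0 fi fc fu]; split.
- by rewrite f0 mulr0.
- by move=> s t s0 st; rewrite ltr_pM2l // fi.
- move=> x x0 e e0; have [d d0 fd] := fc x x0 (e / k) (divr_gt0 e0 k0).
  exists d => // y y0 yx; rewrite -mulrBr normrM gtr0_norm //.
  by rewrite -ltr_pdivlMl // mulrC fd.
- move=> M; have [s s0 Ms] := fu (M / k); exists s => //.
  by rewrite -ltr_pdivrMl // mulrC.
Qed.

Lemma Kinf_sqr : Kinf (fun x : R => x * x).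
Proof.
split=> [|s t s0 st|x x0 e e0|M]; first by rewrite mulr0.
- exact: ltr_pM.
- have k0 : 0 < 2 * x + 1 by rewrite ltr_wpDl // mulr_ge0.
  exists (Num.min 1 (e / (2 * x + 1))); first by rewrite lt_min ltr01 divr_gt0.
  move=> y y0; rewrite lt_min => /andP[y1 y2].
  have -> : y * y - x * x = (y - x) * (y + x) by ring.
  have yx : `|y + x| < 2 * x + 1.
    rewrite ger0_norm ?addr_ge0 //; move: y1; rewrite ltr_norml; lra.
  by rewrite normrM (lt_le_trans (ltr_pM _ _ y2 yx)) ?divfK ?gt_eqF.
- exists (Num.max M 0 + 1); first by rewrite addr_ge0 // le_max lexx orbT.
  have M1 : 1 <= Num.max M 0 + 1 by rewrite lerDr le_max lexx orbT.
  have : M < Num.max M 0 + 1 by rewrite ltr_pwDr // le_max lexx.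
  by move: M1; set m := _ + 1; nra.
Qed.

Definition Kinv f y : R :=
  match pselect (exists x, 0 <= x /\ f x = y) with
  | left P => projT1 (cid P)
  | right _ => 0
  end.

Section Inverse.
Variable f : R -> R.
Hypothesis fK : Kinf f.

Lemma Kinv_spec y : 0 <= y -> 0 <= Kinv f y /\ f (Kinv f y) = y.
Proof.
move=> y0; rewrite /Kinv; case: pselect => [P|[]]; first by case: (cid P).
case: (fK) => f0 _ /nonneg_continuousP fc fu; have [s s0 ys] := fu y.
have fcs : {within `[0, s], continuous f}.
  by apply: continuous_subspaceW fc => z /=; rewrite in_itv /= => /andP[].
have [|c] := @IVT R f 0 s y s0 fcs.
  by rewrite f0 ge_min le_max y0 (ltW ys) orbT.
by rewrite in_itv /= => /andP[c0 _] fcy; exists c.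
Qed.

Lemma Kinv_ge0 y : 0 <= y -> 0 <= Kinv f y.
Proof. by case/Kinv_spec. Qed.

Lemma KinvK y : 0 <= y -> f (Kinv f y) = y.
Proof. by case/Kinv_spec. Qed.

Lemma KKinv x : 0 <= x -> Kinv f (f x) = x.
Proof.
move=> x0; have fx0 := Kinf_ge0 fK x0.
have y0 := Kinv_ge0 fx0.
by apply/eqP; rewrite eq_le -(Kinf_leP fK y0 x0) -(Kinf_leP fK x0 y0) KinvK ?lexx.
Qed.

Lemma Kinv_lt x y : 0 <= x -> 0 <= y -> (Kinv f y < x) = (y < f x).
Proof. by move=> x0 y0; rewrite -(Kinf_ltP fK (Kinv_ge0 y0) x0) KinvK. Qed.

Lemma lt_Kinv x y : 0 <= x -> 0 <= y -> (x < Kinv f y) = (f x < y).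
Proof. by move=> x0 y0; rewrite -(Kinf_ltP fK x0 (Kinv_ge0 y0)) KinvK. Qed.

Lemma Kinf_Kinv : Kinf (Kinv f).
Proof.
have mono s t : 0 <= s -> 0 <= t -> (Kinv f s <= Kinv f t) = (s <= t).
  by move=> s0 t0; rewrite -(Kinf_leP fK (Kinv_ge0 s0) (Kinv_ge0 t0)) !KinvK.
case: (fK) => f0 fi _ _; split.
- by rewrite -{1}f0 KKinv.
- move=> s t s0 st; have t0 := le_trans s0 (ltW st).
  by rewrite ltNge mono // -ltNge.
- move=> y y0 e e0; set x := Kinv f y; have x0 : 0 <= x := Kinv_ge0 y0.
  have xe0 : 0 <= x + e by rewrite addr_ge0 // ltW.
  have up z : 0 <= z -> `|z - y| < f (x + e) - y -> Kinv f z - x < e.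
    move=> z0 zy; rewrite ltrBlDl Kinv_lt //.
    by move: zy; rewrite ltr_norml; lra.
  have fxe : 0 < f (x + e) - y by rewrite subr_gt0 -{1}(KinvK y0) fi // ltrDl.
  have [xe|ex] := ltP x e.
    exists (f (x + e) - y) => // z z0 /(up _ z0) zx; rewrite ltr_norml zx andbT.
    by have := Kinv_ge0 z0; lra.
  have xe0' : 0 <= x - e by rewrite subr_ge0.
  have fex : 0 < y - f (x - e) by rewrite subr_gt0 -(lt_Kinv xe0' y0) -/x; lra.
  exists (Num.min (f (x + e) - y) (y - f (x - e))); first by rewrite lt_min fxe fex.
  move=> z z0; rewrite lt_min => /andP[/(up _ z0) zx zy].
  rewrite ltr_norml zx andbT; suff : x - e < Kinv f z by lra.
  by rewrite lt_Kinv //; move: zy; rewrite ltr_norml; lra.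
- move=> M; have M0 : 0 <= Num.max M 0 by rewrite le_max lexx orbT.
  have M1 : 0 <= Num.max M 0 + 1 by rewrite addr_ge0.
  have MM : M <= Num.max M 0 by rewrite le_max lexx.
  exists (f (Num.max M 0 + 1)); first exact: Kinf_ge0.
  by rewrite KKinv //; lra.
Qed.

End Inverse.
End KinfFunctions.

Arguments Kinf_id {R}.
Arguments Kinf_sqr {R}.

Section KLinfFunctions.
Variable R : realType.
Implicit Types (f a : R -> R) (b : R -> nat -> R).

Definition KLinf b := (forall j, Kinf (b ^~ j)) /\ forall s, 0 <= s ->
  (forall j k, (j <= k)%N -> b s k <= b s j) /\ b s @ \oo --> 0.

Lemma KLinf_classKL b : KLinf b -> classKL b.
Proof.
case=> bK bdec; split=> // j.
by have [[]] := (classKinfP (b ^~ j)).2 (bK j).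
Qed.

Lemma KLinf_comp_l f b : Kinf f -> KLinf b -> KLinf (fun s j => f (b s j)).
Proof.
move=> fK [bK bdec]; split=> [j|s s0]; first exact: (Kinf_comp fK (bK j)).
have [bs_dec bs_cvg] := bdec s s0; have bs0 j := Kinf_ge0 (bK j) s0.
split=> [j k jk|]; first by rewrite Kinf_le ?bs_dec.
exact: Kinf_cvg0.
Qed.

Lemma KLinf_comp_r a b : Kinf a -> KLinf b -> KLinf (fun s j => b (a s) j).
Proof.
move=> aK [bK bdec]; split=> [j|s s0]; first exact: (Kinf_comp (bK j) aK).
exact/bdec/Kinf_ge0.
Qed.

(* The first term is the level [tau] with [rho tau = 2 s / (j + 1)] at which
   [dissipation_invariant] is used in [dissipation_bound]. *)
Definition decay (rho : R -> R) (s : R) (j : nat) : R :=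
  Kinv rho (2 * s / j.+1%:R) + s / j.+1%:R.

Lemma KLinf_decay rho : Kinf rho -> KLinf (decay rho).
Proof.
move=> rhoK; have jK j : Kinf (fun s : R => s / j.+1%:R).
  rewrite (_ : (fun s => _) = (fun s => j.+1%:R^-1 * id s)).
    by apply: (Kinf_scale _ Kinf_id); rewrite invr_gt0.
  by apply/funext => s; rewrite mulrC.
split=> [j|s s0].
  apply: (Kinf_add _ (jK j)); apply: (Kinf_comp (Kinf_Kinv rhoK)).
  rewrite (_ : (fun s => _) = (fun s => 2 * (s / j.+1%:R))).
    exact: (Kinf_scale _ (jK j)).
  by apply/funext => s; rewrite mulrA.
have s2 : 0 <= 2 * s by rewrite mulr_ge0.
have le_frac (c : R) j k : 0 <= c -> (j <= k)%N -> c / k.+1%:R <= c / j.+1%:R.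
  by move=> c0 jk; apply: ler_wpM2l => //; rewrite lef_pV2 ?posrE // ler_nat.
split=> [j k jk|].
  rewrite lerD ?le_frac // (Kinf_le (Kinf_Kinv rhoK)) ?le_frac //.
  by rewrite divr_ge0.
have frac_cvg (c : R) : (fun j => c / j.+1%:R) @ \oo --> 0.
  by have := cvgM (cvg_cst c) (@cvg_harmonic R); rewrite mulr0; apply.
rewrite -[0]addr0; apply: cvgD (frac_cvg s).
by apply: (Kinf_cvg0 (Kinf_Kinv rhoK)) (frac_cvg _) => j; rewrite divr_ge0.
Qed.

End KLinfFunctions.

Section Dissipation.
Variables (R : realType) (rho : R -> R) (y : nat -> R) (W : R).
Hypotheses (rhoK : Kinf rho) (W_ge0 : 0 <= W) (y_ge0 : forall k, 0 <= y k).
Hypothesis y_step : forall k, y k.+1 <= y k - rho (y k) + W.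

(* Above level [Kinv rho (2 * W)] the decrease [rho (y k) / 2] dominates [W]. *)
Lemma dissipation_invariant tau k : 0 <= tau ->
  [\/ y k <= Kinv rho (2 * W) + W, y k <= tau | y k <= y 0 - k%:R * (rho tau / 2)].
Proof.
move=> tau0; have W2 : 0 <= 2 * W by rewrite mulr_ge0.
elim: k => [|k IH]; first by apply: Or33; rewrite mul0r subr0.
have := y_step k; have rk := Kinf_ge0 rhoK (y_ge0 k).
have [small|big] := ltP (y k) (Kinv rho (2 * W)); first by move=> ?; apply: Or31; lra.
have rW : 2 * W <= rho (y k) by rewrite -(KinvK rhoK W2) Kinf_le ?Kinv_ge0.
case: IH => [b|t|d] step; first by apply: Or31; lra.
  by apply: Or32; lra.
have [t|t] := leP (y k) tau; first by apply: Or32; lra.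
have rt : rho tau <= rho (y k) by rewrite Kinf_le // ltW.
by apply: Or33; rewrite -natr1; lra.
Qed.

Lemma dissipation_bound j : y j <= decay rho (y 0) j + (Kinv rho (2 * W) + W).
Proof.
have j0 : 0 < j.+1%:R :> R by rewrite ltr0n.
set s := y 0 / j.+1%:R; have s0 : 0 <= s by rewrite divr_ge0 // ltW.
have s2 : 0 <= 2 * s by rewrite mulr_ge0.
have tail : y 0 - j%:R * (rho (Kinv rho (2 * s)) / 2) = s.
  by rewrite KinvK // /s -natr1; field; rewrite addrC natr1 gt_eqF.
have b0 : 0 <= Kinv rho (2 * W) + W by rewrite addr_ge0 ?Kinv_ge0 ?mulr_ge0.
have tau0 := Kinv_ge0 rhoK s2.
rewrite /decay -mulrA -/s.
by case: (dissipation_invariant j tau0) => h; rewrite ?tail in h; lra.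
Qed.

End Dissipation.

Section LyapunovISS.
Variables (R : realType) (n m : nat) (G : 'rV[R]_n -> 'rV[R]_m -> 'rV[R]_n).
Variables (V : 'rV[R]_n -> R) (ustar : 'rV[R]_n) (a1 a2 rho sigma : R -> R).
Hypotheses (a1K : Kinf a1) (a2K : Kinf a2) (rhoK : Kinf rho) (sigmaK : Kinf sigma).
Hypothesis V_ge : forall u, a1 (enorm (u - ustar)) <= V u.
Hypothesis V_le : forall u, V u <= a2 (enorm (u - ustar)).
Hypothesis V_step : forall u e, V (G u e) <= V u - rho (V u) + sigma (enorm e).

Lemma ISS_of_dissipative_Lyapunov : ISS G [set ustar].
Proof.
have V0 u : 0 <= V u by apply: le_trans (V_ge u); apply/Kinf_ge0/sqrtr_ge0.
have K2 : Kinf (fun x : R => 2 * x) := Kinf_scale (ltr0n _ 2) Kinf_id.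
have a1K' := Kinf_comp (Kinf_Kinv a1K) K2.
exists (fun s j => Kinv a1 (2 * decay rho (a2 s) j)).
exists (fun E => Kinv a1 (2 * (Kinv rho (2 * sigma E) + sigma E))); split.
  exact/KLinf_classKL/(KLinf_comp_l a1K')/KLinf_comp_r/KLinf_decay.
split; first by apply/classKinfP/(Kinf_comp a1K')/Kinf_add/sigmaK;
  apply: Kinf_comp (Kinf_Kinv rhoK) (Kinf_comp K2 sigmaK).
move=> e x e_bd x_step j; rewrite /dist_set !image_set1 !inf1.
set E := sup _; have eE k : enorm (e k) <= E.
  apply: sup_upper_bound; last by exists k.
  by split=> //; exists (enorm (e 0%N)), 0%N.
have E0 : 0 <= E := le_trans (sqrtr_ge0 _) (eE 0%N).
have W0 := Kinf_ge0 sigmaK E0.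
have y_step k : V (x k.+1) <= V (x k) - rho (V (x k)) + sigma E.
  by rewrite x_step; apply: le_trans (V_step _ _) _; rewrite lerD2l Kinf_le ?sqrtr_ge0.
have yj := dissipation_bound rhoK W0 (fun k => V0 (x k)) y_step j.
have [decayK _] := KLinf_decay rhoK.
have decay_le := Kinf_le (decayK j) (V0 _) (V_le (x 0%N)).
have B0 : 0 <= Kinv rho (2 * sigma E) + sigma E by rewrite addr_ge0 ?Kinv_ge0 ?mulr_ge0.
have dist_le : enorm (x j - ustar) <= Kinv a1 (V (x j)).
  by rewrite -(Kinf_leP a1K) ?KinvK ?sqrtr_ge0 ?Kinv_ge0.
have D0 : 0 <= decay rho (a2 (enorm (x 0%N - ustar))) j.
  exact (Kinf_ge0 (decayK j) (Kinf_ge0 a2K (sqrtr_ge0 _))).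
apply: le_trans dist_le (le_trans _ (Kinf_add_le (Kinf_Kinv a1K) D0 B0)).
apply: (Kinf_le (Kinf_Kinv a1K) (V0 (x j))).
by apply: le_trans yj _; rewrite lerD2r.
Qed.

End LyapunovISS.

Section EuclideanSpace.
Variables (R : realType) (n : nat).
Implicit Types (u v w : 'rV[R]_n) (k l M : R).

Lemma dotvC u v : dotv u v = dotv v u.
Proof. by apply: eq_bigr => i _; rewrite mulrC. Qed.

Lemma dotvDl u w v : dotv (u + w) v = dotv u v + dotv w v.
Proof. by rewrite /dotv -big_split; apply: eq_bigr => i _; rewrite mxE mulrDl. Qed.

Lemma dotvZl k u v : dotv (k *: u) v = k * dotv u v.
Proof. by rewrite /dotv mulr_sumr; apply: eq_bigr => i _; rewrite mxE mulrA. Qed.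

Lemma dotvNl u v : dotv (- u) v = - dotv u v.
Proof. by rewrite -scaleN1r dotvZl mulN1r. Qed.

Lemma dotvBl u w v : dotv (u - w) v = dotv u v - dotv w v.
Proof. by rewrite dotvDl dotvNl. Qed.

Lemma dotvDr u w v : dotv v (u + w) = dotv v u + dotv v w.
Proof. by rewrite dotvC dotvDl !(dotvC v). Qed.

Lemma dotvZr k u v : dotv v (k *: u) = k * dotv v u.
Proof. by rewrite dotvC dotvZl dotvC. Qed.

Lemma dotvNr u v : dotv v (- u) = - dotv v u.
Proof. by rewrite dotvC dotvNl dotvC. Qed.

Lemma dotvBr u w v : dotv v (u - w) = dotv v u - dotv v w.
Proof. by rewrite dotvDr dotvNr. Qed.

Lemma dotv0l v : dotv 0 v = 0.
Proof. by rewrite -(scale0r 0) dotvZl mul0r. Qed.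

Lemma dotv_ge0 u : 0 <= dotv u u.
Proof. by apply: sumr_ge0 => i _; rewrite -expr2 sqr_ge0. Qed.

Lemma enorm_ge0 u : 0 <= enorm u.
Proof. exact: sqrtr_ge0. Qed.

Lemma enorm_sqr u : enorm u * enorm u = dotv u u.
Proof. by rewrite -expr2 sqr_sqrtr // dotv_ge0. Qed.

Lemma dotv_young u v l : 0 < l -> 2 * dotv u v <= l * dotv u u + dotv v v / l.
Proof.
move=> l0; have := dotv_ge0 (l *: u - v).
rewrite dotvBl !dotvBr !dotvZl !dotvZr (dotvC v u) => h.
rewrite -(ler_pM2l l0) mulrDr [l * (_ / l)]mulrCA divff ?gt_eqF // mulr1; lra.
Qed.

Lemma enormZ k u : 0 <= k -> enorm (k *: u) = k * enorm u.
Proof.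
move=> k0; rewrite /enorm dotvZl dotvZr mulrA sqrtrM ?mulr_ge0 //.
by rewrite -expr2 sqrtr_sqr ger0_norm.
Qed.

Lemma dotv_le_enorm u v M : 0 < M -> enorm u <= M * enorm v ->
  dotv u v <= M * dotv v v.
Proof.
move=> M0 uv; have Mi : 0 < M^-1 by rewrite invr_gt0.
have := dotv_young u v Mi; rewrite invrK.
have : dotv u u <= M * M * dotv v v.
  by rewrite -!enorm_sqr mulrACA ler_pM ?enorm_ge0.
rewrite -(ler_pM2l Mi) !mulrA mulVf ?gt_eqF // mul1r; lra.
Qed.

End EuclideanSpace.

Section Smoothness.
Variables (R : realType) (n : nat) (phi : 'rV[R]_n -> R) (g : 'rV[R]_n -> 'rV[R]_n).
Implicit Types u v : 'rV[R]_n.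
Hypothesis phi_grad : is_gradient phi g.

Lemma is_derive_gradient_line u v (t : R) :
  is_derive t 1 (fun s : R => phi (u + s *: v)) (dotv (g (u + t *: v)) v).
Proof.
have [dphi dphiE] := phi_grad (u + t *: v).
have line_shift : (fun h : R => h^-1 *: (phi (u + (h *: 1 + t) *: v) - phi (u + t *: v))) =
    (fun h : R => h^-1 *: ((phi \o shift (u + t *: v)) (h *: v) - phi (u + t *: v))).
  by apply/funext => h /=; rewrite /shift /= scalerDl [h%:A]mulr1 addrCA.
apply: DeriveDef; first by rewrite /derivable /= line_shift; exact: diff_derivable.
by rewrite /derive /= line_shift -dphiE -deriveE.
Qed.

Variable L : R.
Hypotheses (L_gt0 : 0 < L) (g_lip : forall u v, enorm (g u - g v) <= L * enorm (u - v)).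

(* [t |-> phi (u + t v) - t <g u, v> - t^2 L/2 |v|^2] is nonincreasing on [0, 1]. *)
Lemma descent_lemma u v : phi (u + v) <= phi u + dotv (g u) v + L / 2 * dotv v v.
Proof.
pose F t := phi (u + t *: v).
have dF (t : R) : is_derive t 1 F (dotv (g (u + t *: v)) v) := is_derive_gradient_line u v t.
pose P := dotv (g u) v \*: (@id R) + L / 2 * dotv v v \*: ((@id R) * (@id R)).
have dFP (t : R) : is_derive t 1 (F - P) (dotv (g (u + t *: v)) v -
    (dotv (g u) v *: 1 + L / 2 * dotv v v *: (t *: 1 + t *: 1))) by apply: is_deriveB.
have FP_derivable (t : R) : derivable (F - P) t 1 := @ex_derive _ _ _ _ _ _ _ (dFP t).
have FP_cont : {within `[0, 1], continuous (F - P)}.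
  apply: continuous_subspaceT => t.
  exact/differentiable_continuous/derivable1_diffP/FP_derivable.
have FP_decr (t : R) : t \in `]0, 1[ -> derive1 (F - P) t <= 0.
  rewrite in_itv /= => /andP[t0 _]; rewrite derive1E (@derive_val _ _ _ _ _ _ _ (dFP t)).
  have : dotv (g (u + t *: v) - g u) v <= L * t * dotv v v.
    apply: dotv_le_enorm; first by rewrite mulr_gt0.
    by apply: le_trans (g_lip _ _) _; rewrite addrC addKr enormZ ?(ltW t0) // mulrA.
  by rewrite dotvBl ![_%:A]mulr1 -[_ *: (t + t)]/(_ * (t + t)); lra.
have FP10 : (F - P) 1 <= (F - P) 0.
  apply: (ler0_derive1_le_cc (fun t _ => FP_derivable t) FP_decr FP_cont);
  by rewrite ?in_itv /= ?ler01 ?lexx.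
move: FP10; rewrite /F /P /= !fctE /= scale1r scale0r addr0 [_%:A]mulr1 mulr0 !scaler0.
by rewrite -[_ *: (1 * 1)]/(_ * (1 * 1)) !mulr1; lra.
Qed.

End Smoothness.

Section GradientStep.
Variables (R : realType) (n : nat) (phi : 'rV[R]_n -> R) (g : 'rV[R]_n -> 'rV[R]_n).
Variables (L gamma : R).
Hypotheses (phi_grad : is_gradient phi g) (L_gt0 : 0 < L).
Hypothesis g_lip : forall u v, enorm (g u - g v) <= L * enorm (u - v).
Hypotheses (gamma_gt0 : 0 < gamma) (gammaL_lt2 : gamma * L < 2).

(* The descent lemma, with the cross term [<g u, e>] absorbed by Young's inequality. *)
Lemma gradient_step_le u e :
  phi (u - gamma *: (g u + e)) <= phi u - gamma * (2 - gamma * L) / 4 * dotv (g u) (g u)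
    + gamma * ((gamma * L - 1) ^+ 2 + 1) / (2 * (2 - gamma * L)) * dotv e e.
Proof.
set A := dotv (g u) (g u); set B := dotv (g u) e; set C := dotv e e.
set c := gamma * (2 - gamma * L) / 2; set k := gamma * (gamma * L - 1).
have c0 : 0 < c by rewrite !mulr_gt0 // subr_gt0.
have step : phi (u - gamma *: (g u + e)) <= phi u - c * A + k * B + L * gamma ^+ 2 / 2 * C.
  have := descent_lemma phi_grad L_gt0 g_lip u (- (gamma *: (g u + e))).
  rewrite !dotvNr !dotvNl opprK !dotvZl !dotvZr !dotvDl !dotvDr (dotvC e) -/A -/B -/C.
  by move/le_trans; apply; rewrite le_eqVlt; apply/predU1P; left; rewrite /c /k; field.
have young : 2 * (k * B) <= c * A + k * k * C / c.
  by have := dotv_young (g u) (k *: e) c0; rewrite !dotvZr dotvZl -/A -/B -/C !mulrA.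
have -> : phi u - gamma * (2 - gamma * L) / 4 * A
    + gamma * ((gamma * L - 1) ^+ 2 + 1) / (2 * (2 - gamma * L)) * C =
    phi u - c * A + k * B + L * gamma ^+ 2 / 2 * C + (c * A + k * k * C / c - 2 * (k * B)) / 2.
  rewrite /c /k; field; rewrite subr_eq0 gt_eqF ?gammaL_lt2 ?andbT //; exact: lt0r_neq0.
move: young step; move: (k * k * C / c) => T; lra.
Qed.

End GradientStep.

Theorem proposition2 (R : realType) (n : nat)
  (phi : 'rV[R]_n -> R) (g : 'rV[R]_n -> 'rV[R]_n)
  (L : R) (ustar : 'rV[R]_n) (mu1 mu2 : R -> R) (gamma : R) :
  AssumptionA phi g L ustar mu1 mu2 ->
  0 < gamma * L < 2 ->
  ISS (fun (u e : 'rV[R]_n) => u - gamma *: (g u + e)) [set ustar].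
Proof.
move=> [phi_grad [_ [L0 [/classKinfP mu1K [/classKinfP mu2K [g_zero [V_ge [mu2_le g_lip]]]]]]]].
move=> /andP[gL0 gL2]; have gamma0 : 0 < gamma by rewrite -(pmulr_lgt0 _ L0).
pose c := gamma * (2 - gamma * L) / 4.
pose K := gamma * ((gamma * L - 1) ^+ 2 + 1) / (2 * (2 - gamma * L)).
have c0 : 0 < c by rewrite !mulr_gt0 // subr_gt0.
have K0 : 0 < K.
  by rewrite divr_gt0 ?mulr_gt0 ?subr_gt0 // (ltr_wpDl (sqr_ge0 _) ltr01).
apply: (ISS_of_dissipative_Lyapunov (V := fun u => phi u - phi ustar) mu1K
  (Kinf_scale (divr_gt0 L0 (ltr0n _ 2)) Kinf_sqr) (Kinf_scale c0 (Kinf_comp Kinf_sqr mu2K))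
  (Kinf_scale K0 Kinf_sqr)) => // [u|u e] /=.
  have := descent_lemma phi_grad L0 g_lip ustar (u - ustar).
  by rewrite (g_zero ustar).2 // dotv0l addr0 addrC subrK -enorm_sqr; lra.
have := gradient_step_le phi_grad L0 g_lip gamma0 gL2 u e; rewrite -!enorm_sqr -/c -/K.
have mu2V := Kinf_ge0 mu2K (le_trans (Kinf_ge0 mu1K (enorm_ge0 _)) (V_ge u)).
have : c * (mu2 (phi u - phi ustar) * mu2 (phi u - phi ustar)) <= c * (enorm (g u) * enorm (g u)).
  by rewrite ler_pM2l //; apply: ler_pM.
lra.
Qed.
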